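(* Let $S=(s_1,\dots,s_m)\in[n]^m$ and let $P=([a_1,b_1],\dots,[a_k,b_k])$ be a partition of $[n]$ into $k$ consecutive intervals, so $a_1=1$, $b_k=n$ and $a_{i+1}=b_i+1$. For each $i$, let $S_i$ be the sequence obtained by going through $S$ in order and, for each $s_j\in[a_i,b_i]$, appending $s_j-a_i+1$; thus $S_i$ is a sequence over $[b_i-a_i+1]$. Let $\tilde S=(\tilde s_1,\dots,\tilde s_m)\in[k]^m$ with $\tilde s_j=i$ iff $s_j\in[a_i,b_i]$. Then $\mathrm{OPT}(S)\le\sum_{i=1}^k\mathrm{OPT}(S_i)+3\,\mathrm{OPT}(\tilde S)$.
   Context: Dynamic BST model: for a sequence over key set $[N]$, an algorithm first chooses an initial BST on $[N]$. To serve access $s_t$ it touches a set of nodes forming a connected subtree containing the root and $s_t$, may rearrange the touched nodes into any BST shape (untouched subtrees reattached in the unique valid way), and pays the number of touched nodes. $\mathrm{OPT}$ of a sequence is the minimum total cost over all offline algorithms on its key set. *)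

From mathcomp Require Import all_boot.
From mathcomp Require Import boolp.

Set Implicit Arguments.
Unset Strict Implicit.
Unset Printing Implicit Defensive.

Inductive tree := Leaf | Node of tree & nat & tree.

Fixpoint inorder (t : tree) : seq nat :=
  if t is Node l k r then inorder l ++ k :: inorder r else [::].

Definition is_bst (N : nat) (t : tree) : Prop := inorder t = iota 1 N.

Fixpoint anc (t : tree) (x : nat) : seq nat :=
  if t is Node l k r then
    k :: (if x == k then [::] else if x < k then anc l x else anc r x)
  else [::].

Fixpoint find_sub (t : tree) (x : nat) : tree :=
  if t is Node l k r then
    if x == k then t else if x < k then find_sub l x else find_sub r x
  else Leaf.

(* One access to s: the touched set R (without repetitions) is a connected
   subtree of T containing the root and s (closed under ancestors); the
   touched nodes are rearranged into a BST T' on [N] in which every untouched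
   node keeps its whole subtree (untouched subtrees reattached). *)
Definition step (N : nat) (T : tree) (s : nat) (R : seq nat) (T' : tree) : Prop :=
  [/\ uniq R, {subset R <= inorder T}, s \in R,
      (forall x, x \in R -> {subset anc T x <= R}) &
      is_bst N T'] /\
      (forall x, x \in inorder T -> x \notin R -> find_sub T x = find_sub T' x).

Fixpoint serves (N : nat) (T : tree) (S : seq nat) (c : nat) : Prop :=
  if S is s :: S' then
    exists R T' c', [/\ step N T s R T', serves N T' S' c' & c = size R + c']
  else c = 0.

Definition feasible (N : nat) (S : seq nat) (c : nat) : Prop :=
  exists T0, is_bst N T0 /\ serves N T0 S c.

Lemma feasible_ex (N : nat) (S : seq nat) :
  (exists c, feasible N S c) -> exists c, `[< feasible N S c >].
Proof. by case=> c h; exists c; apply/asboolP. Qed.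

(* OPT = minimum total cost (0 by convention if no algorithm exists) *)
Definition OPT (N : nat) (S : seq nat) : nat :=
  match pselect (exists c, feasible N S c) with
  | left H => ex_minn (feasible_ex H)
  | right _ => 0
  end.

(* From BSTs U on the block indices and T_i on the blocks, build a BST on [n] by
   replacing each index i of U by the first key a_i of block i, whose right child
   is its last key b_i, whose left subtree in turn holds the inner keys of block
   i arranged as in T_i.  An access to s in block j is simulated by touching both
   ends of every block touched by the access to j in U, together with the keys
   touched in T_j (shifted into place).  This set is closed under ancestors, and
   rearranging it according to the new U and the new T_j leaves every untouched
   subtree intact.  Each step thus costs at most 2 cost(U) + cost(T_j), so
   OPT(S) <= sum_i OPT(S_i) + 2 OPT(S~). *)

From mathcomp Require Import all_boot zify.
From mathcomp Require boolp.

Set Implicit Arguments.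
Unset Strict Implicit.
Unset Printing Implicit Defensive.

Definition search_tree t := pairwise ltn (inorder t).

Lemma search_tree_iota t m p : inorder t = iota m p -> search_tree t.
Proof.
by rewrite /search_tree => ->; rewrite -sorted_pairwise ?iota_ltn_sorted //; exact: ltn_trans.
Qed.

Lemma search_tree_node l k r : search_tree (Node l k r) ->
  [/\ search_tree l, search_tree r, (forall y, y \in inorder l -> y < k) &
      (forall y, y \in inorder r -> k < y)].
Proof.
rewrite /search_tree /= pairwise_cat pairwise_cons allrel_consr.
by case/and3P=> /andP[/allP Hl _] Hpl /andP[/allP Hr Hpr].
Qed.

Lemma inorder_nilP t : inorder t = [::] -> t = Leaf.
Proof. by case: t => //= l x r; case: (inorder l). Qed.

Lemma inorder_find_sub t x : {subset inorder (find_sub t x) <= inorder t}.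
Proof.
elim: t => //= l IHl k r IHr y.
case: ifP => _ //; case: ifP => _ Hy; rewrite mem_cat inE.
- by rewrite IHl.
- by rewrite IHr ?orbT.
Qed.

Lemma anc_sub t x : {subset anc t x <= inorder t}.
Proof.
elim: t => //= l IHl k r IHr y; rewrite inE mem_cat inE.
case/orP=> [->|]; first by rewrite orbT.
case: ifP => _ //; case: ifP => _ Hy.
- by rewrite IHl.
- by rewrite IHr ?orbT.
Qed.

Lemma mem_anc_find_sub t x y :
  search_tree t -> y \in inorder (find_sub t x) -> x \in anc t y.
Proof.
elim: t => //= l IHl k r IHr /search_tree_node[sl sr Hl Hr].
case: (eqVneq x k) => [->|xk]; first by rewrite inE eqxx.
case: ifP => xlt Hy.
- have ylt := Hl _ (inorder_find_sub Hy).
  by rewrite inE (ltn_eqF ylt) ylt IHl ?orbT.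
- have ylt := Hr _ (inorder_find_sub Hy).
  by rewrite inE (gtn_eqF ylt) ltnNge (ltnW ylt) /= IHr ?orbT.
Qed.

Lemma find_sub_neq_Leaf t x :
  search_tree t -> x \in inorder t -> find_sub t x <> Leaf.
Proof.
elim: t => //= l IHl k r IHr /search_tree_node[sl sr Hl Hr].
rewrite mem_cat inE; case: (eqVneq x k) => //= xk.
case: ifP => xlt.
- case/orP=> // H; first exact: IHl.
  by have := Hr _ H; lia.
- case/orP=> H; last exact: IHr.
  by have := Hl _ H; lia.
Qed.

Fixpoint shift d t :=
  if t is Node l k r then Node (shift d l) (k + d) (shift d r) else Leaf.

Lemma inorder_shift d t : inorder (shift d t) = map (addn^~ d) (inorder t).
Proof. by elim: t => //= l IHl k r IHr; rewrite IHl IHr map_cat. Qed.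

Lemma anc_shift d t y : anc (shift d t) (y + d) = map (addn^~ d) (anc t y).
Proof.
elim: t => //= l IHl k r IHr; rewrite eqn_add2r ltn_add2r.
by case: ifP => _ //=; case: ifP => _; rewrite /= ?IHl ?IHr.
Qed.

Lemma find_sub_shift d t y :
  find_sub (shift d t) (y + d) = shift d (find_sub t y).
Proof.
elim: t => //= l IHl k r IHr; rewrite eqn_add2r ltn_add2r.
by case: ifP => _ //=; case: ifP => _; rewrite /= ?IHl ?IHr.
Qed.
Fixpoint del_min t :=
  match t with
  | Leaf => Leaf
  | Node Leaf _ r => r
  | Node l k r => Node (del_min l) k r
  end.

Fixpoint del_max t :=
  match t with
  | Leaf => Leaf
  | Node l _ Leaf => l
  | Node l k r => Node l k (del_max r)
  end.

Definition is_leaf t := if t is Leaf then true else false.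

Lemma is_leafP t : is_leaf t -> t = Leaf. Proof. by case: t. Qed.

Lemma del_min_node l k r :
  ~~ is_leaf l -> del_min (Node l k r) = Node (del_min l) k r.
Proof. by case: l. Qed.

Lemma del_max_node l k r :
  ~~ is_leaf r -> del_max (Node l k r) = Node l k (del_max r).
Proof. by case: r => //; case: l. Qed.

Lemma inorder_cons t : ~~ is_leaf t -> exists x s, inorder t = x :: s.
Proof. by case: t => //= l k r _; case: (inorder l) => [|x s] /=; do 2 eexists. Qed.

Lemma inorder_rcons t : ~~ is_leaf t -> exists x s, inorder t = rcons s x.
Proof.
case: t => //= l k r _; case/lastP: (inorder r) => [|s x] /=.
  by exists k, (inorder l); rewrite cats1.
by exists x, (inorder l ++ k :: s); rewrite rcons_cat.
Qed.

Lemma inorder_del_min t x s : inorder t = x :: s -> inorder (del_min t) = s.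
Proof.
elim: t x s => //= l IHl k r _ x s.
case: l IHl => [|l1 k1 r1] IHl /=; first by case.
case E: (inorder l1 ++ k1 :: inorder r1) => [|y s1] //=.
  by case: (inorder l1) E.
by case=> _ <-; rewrite (IHl y s1).
Qed.

Lemma inorder_del_max t x s : inorder t = rcons s x -> inorder (del_max t) = s.
Proof.
elim: t x s => [x s|l _ k r IHr x s] /=; first by case: s.
case: r IHr => [|l1 k1 r1] IHr /=; first by rewrite cats1 => /rcons_inj[].
case/lastP E: (inorder l1 ++ k1 :: inorder r1) => [|s1 y].
  by case: (inorder l1) E.
rewrite -rcons_cons -rcons_cat => /rcons_inj[<- _].
by rewrite (IHr y s1).
Qed.

Lemma anc_del_min t y : search_tree t -> y \in inorder (del_min t) ->
  {subset anc (del_min t) y <= anc t y}.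
Proof.
elim: t y => [//|l IHl k r IHr] y /search_tree_node[sl sr Hl Hr].
have [/is_leafP -> /= Hy z Hz|nl] := boolP (is_leaf l).
  have ky := Hr _ Hy.
  by rewrite inE (gtn_eqF ky) ltnNge (ltnW ky) /= Hz orbT.
rewrite del_min_node //= mem_cat inE => Hy z; rewrite !inE.
case/orP=> [->//|]; case: ifP => // yk; case: ifP => ylt Hz; last by rewrite Hz orbT.
apply/orP; right; apply: IHl => //.
case/or3P: Hy => //; first by rewrite yk.
by move/Hr; lia.
Qed.

Lemma anc_del_max t y : search_tree t -> y \in inorder (del_max t) ->
  {subset anc (del_max t) y <= anc t y}.
Proof.
elim: t y => [//|l IHl k r IHr] y /search_tree_node[sl sr Hl Hr].
have [/is_leafP -> /= Hy z Hz|nr] := boolP (is_leaf r).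
  have ky := Hl _ Hy.
  by rewrite inE (ltn_eqF ky) ky /= Hz orbT.
rewrite del_max_node //= mem_cat inE => Hy z; rewrite !inE.
case/orP=> [->//|]; case: ifP => // yk; case: ifP => // ylt Hz.
  by rewrite Hz orbT.
apply/orP; right; apply: IHr => //.
case/or3P: Hy => //; last by rewrite yk.
by move/Hl; lia.
Qed.

Lemma find_sub_del_min t y (m := head 0 (inorder t)) :
  search_tree t -> y \in inorder t -> y != m ->
  find_sub (del_min t) y =
    if m \in inorder (find_sub t y) then del_min (find_sub t y) else find_sub t y.
Proof.
rewrite {}/m; elim: t y => [//|l IHl k r IHr] y /search_tree_node[sl sr Hl Hr].
have [/is_leafP -> /=|nl] := boolP (is_leaf l).
  rewrite inE => /orP[/eqP->|Hy]; first by rewrite eqxx.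
  have ky := Hr _ Hy => _; rewrite (gtn_eqF ky) ltnNge (ltnW ky) /=.
  by case: ifP => // /inorder_find_sub /Hr; lia.
have [m [s Es]] := inorder_cons nl.
have Eh : head 0 (inorder (Node l k r)) = m by rewrite /= Es.
rewrite del_min_node // Eh /= mem_cat inE => Hy ym.
case: (eqVneq y k) => [Eyk|yk]; first by subst y; rewrite del_min_node //= mem_cat Es inE eqxx.
case: ifP => ylt.
  have yl : y \in inorder l.
    case/or3P: Hy => //; first by rewrite (negPf yk).
    by move/Hr; lia.
  by rewrite IHl // Es.
case: ifP => // /inorder_find_sub /Hr.
by have := Hl m; rewrite Es inE eqxx => /(_ isT); lia.
Qed.

Lemma find_sub_del_max t y (m := last 0 (inorder t)) :
  search_tree t -> y \in inorder t -> y != m ->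
  find_sub (del_max t) y =
    if m \in inorder (find_sub t y) then del_max (find_sub t y) else find_sub t y.
Proof.
rewrite {}/m; elim: t y => [//|l IHl k r IHr] y /search_tree_node[sl sr Hl Hr].
have [/is_leafP -> /=|nr] := boolP (is_leaf r).
  rewrite last_cat /= mem_cat inE orbC => /orP[/eqP->|Hy]; first by rewrite eqxx.
  have ky := Hl _ Hy => _; rewrite (ltn_eqF ky) ky /=.
  by case: ifP => // /inorder_find_sub /Hl; lia.
have [m [s Es]] := inorder_rcons nr.
have Eh : last 0 (inorder (Node l k r)) = m by rewrite /= Es last_cat /= last_rcons.
rewrite del_max_node // Eh /= mem_cat inE => Hy ym.
case: (eqVneq y k) => [Eyk|yk]; first subst y.
  by rewrite del_max_node //= mem_cat Es inE mem_rcons inE eqxx !orbT.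
case: ifP => ylt.
  case: ifP => // /inorder_find_sub /Hl.
  by have := Hr m; rewrite Es mem_rcons inE eqxx => /(_ isT); lia.
have yr : y \in inorder r.
  case/or3P: Hy => //; last by rewrite (negPf yk).
  by move/Hl; lia.
by rewrite IHr // Es last_rcons.
Qed.

Lemma find_sub_del_min_eq t t' y : search_tree t -> search_tree t' ->
  inorder t = inorder t' -> y \in inorder t -> y != head 0 (inorder t) ->
  find_sub t y = find_sub t' y -> find_sub (del_min t) y = find_sub (del_min t') y.
Proof. by move=> st st' E Hy Hh Hf; rewrite !find_sub_del_min -?E // Hf. Qed.

Lemma find_sub_del_max_eq t t' y : search_tree t -> search_tree t' ->
  inorder t = inorder t' -> y \in inorder t -> y != last 0 (inorder t) ->
  find_sub t y = find_sub t' y -> find_sub (del_max t) y = find_sub (del_max t') y.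
Proof. by move=> st st' E Hy Hh Hf; rewrite !find_sub_del_max -?E // Hf. Qed.

Lemma feasible_OPT N S c : feasible N S c -> feasible N S (OPT N S) /\ OPT N S <= c.
Proof.
move=> Hc; rewrite /OPT; case: boolp.pselect => [H|[]]; last by exists c.
case: ex_minnP => m /boolp.asboolP Hm Hmin; split => //.
by apply/Hmin/boolp.asboolP.
Qed.

Fixpoint right_path m p := if p is p'.+1 then Node Leaf m (right_path m.+1 p') else Leaf.

Lemma inorder_right_path m p : inorder (right_path m p) = iota m p.
Proof. by elim: p m => //= p IH m; rewrite IH. Qed.

Lemma feasible_in_range N S : all (fun s => 1 <= s <= N) S -> exists c, feasible N S c.
Proof.
move=> HS; exists (size S * N), (right_path 1 N); split; first exact: inorder_right_path.
elim: S HS => //= s S IH /andP[Hs HS].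
exists (iota 1 N), (right_path 1 N), (size S * N); split; last by rewrite size_iota mulSn.
- split; first split.
  + exact: iota_uniq.
  + by move=> z; rewrite inorder_right_path.
  + by rewrite mem_iota; lia.
  + by move=> x _ z /anc_sub; rewrite inorder_right_path.
  + exact: inorder_right_path.
  + by move=> x; rewrite inorder_right_path => ->.
- exact: IH.
Qed.

Lemma all2_nth (P : nat -> nat -> bool) (s t : seq nat) : size s = size t ->
  (forall j, j < size t -> P (nth 0 s j) (nth 0 t j)) -> all2 P s t.
Proof.
elim: s t => [|x s IH] [|y t] //= [E] H.
by rewrite (H 0) //= IH // => j Hj; exact: (H j.+1).
Qed.

Lemma sum_nat_update (c : nat -> nat) j x m : 1 <= j < m ->
  \sum_(1 <= i < m) (if i == j then x else c i) + c j = \sum_(1 <= i < m) c i + x.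
Proof.
move=> /andP[j_gt0 lt_jm].
rewrite !(@big_cat_nat _ _ _ j 1 m) ?(ltnW lt_jm) // !(@big_ltn _ _ _ j m) // eqxx.
rewrite (@eq_big_nat _ _ _ 1 j _ c) => [|i /andP[_ lt_ij]]; last by rewrite (ltn_eqF lt_ij).
rewrite (@eq_big_nat _ _ _ j.+1 m _ c) => [|i /andP[lt_ji _]]; last by rewrite (gtn_eqF lt_ji).
by rewrite /=; lia.
Qed.

Section BlockPartition.

Variables (n k : nat) (a b : nat -> nat).
Hypothesis k_gt0 : 0 < k.
Hypothesis a1 : a 1 = 1.
Hypothesis bk : b k = n.
Hypothesis a_next : forall i, 1 <= i < k -> a i.+1 = (b i).+1.
Hypothesis a_le_b : forall i, 1 <= i <= k -> a i <= b i.

Lemma block_lt i i' : 1 <= i -> i < i' -> i' <= k -> b i < a i'.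
Proof.
move=> i_gt0; elim: i' => // i' IH lt_ii' le_i'k.
case: (ltngtP i i') => [lt|gt|<-]; last by rewrite a_next; lia.
- have := IH lt (ltnW le_i'k); have := a_le_b (i := i'); have := a_next (i := i'); lia.
- lia.
Qed.

Lemma block_order i i' x : 1 <= i <= k -> 1 <= i' <= k -> a i <= x <= b i ->
  ((x < a i') = (i < i')) /\ ((b i' < x) = (i' < i)).
Proof.
move=> Hi Hi' Hx; have := a_le_b Hi; have := a_le_b Hi'.
case: (ltngtP i i') => [lt|gt|<-]; last lia.
- by have := @block_lt i i'; lia.
- by have := @block_lt i' i; lia.
Qed.

Lemma block_unique i i' x : 1 <= i <= k -> 1 <= i' <= k ->
  a i <= x <= b i -> a i' <= x <= b i' -> i = i'.
Proof.
move=> Hi Hi' Hx Hx'; have [] := block_order Hi Hi' Hx.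
by case: (ltngtP i i') => // _; lia.
Qed.

Definition block_size i := b i - a i + 1.

Definition block_keys i := iota (a i) (block_size i).

Lemma flatten_block_keys m : 1 <= m <= k ->
  flatten [seq block_keys i | i <- iota 1 m] = iota 1 (b m).
Proof.
elim: m => // m IH /andP[_ le_mk]; have := a_le_b (i := m.+1).
case: (posnP m) => [-> /= _|m_gt0 ab_m].
  by rewrite cats0 /block_keys /block_size a1; congr iota; have := a_le_b (i := 1); lia.
have -> : b m.+1 = b m + block_size m.+1.
  by rewrite /block_size; have := a_next (i := m); lia.
rewrite -(addn1 m) iotaD map_cat flatten_cat IH ?m_gt0 ?(ltnW le_mk) //= cats0.
by rewrite add1n addn1 /block_keys a_next ?m_gt0 // iotaD add1n.
Qed.

Lemma block_exists x : 1 <= x <= n -> exists2 i, 1 <= i <= k & a i <= x <= b i.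
Proof.
move=> Hx; have : x \in iota 1 n by rewrite mem_iota; lia.
rewrite -bk -flatten_block_keys ?k_gt0 ?leqnn //.
case/flatten_mapP => i; rewrite !mem_iota /block_size => Hi Hx'.
by exists i; [lia | have := a_le_b (i := i); lia].
Qed.

Lemma block_start_gt0 i : 1 <= i <= k -> 0 < a i.
Proof.
move=> Hi; case: (ltngtP 1 i) => [lt|gt|<-]; last by rewrite a1.
- by have := @block_lt 1 i (leqnn 1) lt; lia.
- lia.
Qed.

Lemma block_end_le i : 1 <= i <= k -> b i <= n.
Proof.
move=> Hi; case: (ltngtP i k) => [lt|gt|->]; last by rewrite bk.
- by have := @block_lt i k; have := a_le_b (i := k); rewrite bk; lia.
- lia.
Qed.

Fixpoint compose (I : nat -> tree) (U : tree) : tree :=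
  match U with
  | Leaf => Leaf
  | Node L i R => Node (compose I L) (a i)
      (if a i < b i then Node (I i) (b i) (compose I R) else compose I R)
  end.

Lemma eq_compose I I' U :
  (forall i, i \in inorder U -> I i = I' i) -> compose I U = compose I' U.
Proof.
elim: U => //= L IHL i R IHR eqI.
rewrite eqI ?mem_cat ?inE ?eqxx ?orbT // IHL => [|j Hj]; last by rewrite eqI // mem_cat Hj.
by rewrite IHR // => j Hj; rewrite eqI // mem_cat inE Hj !orbT.
Qed.

Definition indices_in_range U := all (fun i => 1 <= i <= k) (inorder U).

Lemma indices_in_range_node L i R : indices_in_range (Node L i R) ->
  [/\ indices_in_range L, 1 <= i <= k & indices_in_range R].
Proof. by rewrite /indices_in_range /= all_cat /= => /and3P[-> /andP[-> ->]]. Qed.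

Lemma is_bst_indices_in_range U : is_bst k U -> indices_in_range U.
Proof. by rewrite /indices_in_range => ->; apply/allP => i; rewrite mem_iota; lia. Qed.

Definition inner_keys i := iota (a i).+1 (b i - a i - 1).

Lemma block_keys_split i : a i < b i ->
  block_keys i = a i :: rcons (inner_keys i) (b i).
Proof.
move=> lt_ab; rewrite /block_keys /block_size /inner_keys.
rewrite (_ : b i - a i + 1 = (b i - a i - 1 + 1).+1); last lia.
by rewrite /= iotaD cats1; do 2 f_equal; lia.
Qed.

Lemma inorder_compose I U : indices_in_range U ->
  (forall i, i \in inorder U -> inorder (I i) = inner_keys i) ->
  inorder (compose I U) = flatten [seq block_keys i | i <- inorder U].
Proof.
elim: U => //= L IHL i R IHR /indices_in_range_node[inL Hi inR] HI.
rewrite map_cat flatten_cat /= IHL => [|//|j Hj]; last by rewrite HI // mem_cat Hj.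
congr (_ ++ _); case: ifP => lt_ab /=; rewrite IHR // => [|j Hj];
  try by rewrite HI // mem_cat inE Hj !orbT.
- by rewrite block_keys_split // HI ?mem_cat ?inE ?eqxx ?orbT // -cat_rcons.
- rewrite /block_keys /block_size (_ : b i - a i + 1 = 1) //.
  by have := a_le_b Hi; lia.
Qed.

Lemma is_bst_compose I U : is_bst k U ->
  (forall i, 1 <= i <= k -> inorder (I i) = inner_keys i) ->
  is_bst n (compose I U).
Proof.
move=> HU HI; rewrite /is_bst inorder_compose ?is_bst_indices_in_range //.
  by rewrite HU flatten_block_keys ?k_gt0 ?leqnn ?bk.
by move=> i; rewrite HU mem_iota => Hi; apply: HI; lia.
Qed.

Definition block_ends (l : seq nat) := flatten [seq [:: a i; b i] | i <- l].

Lemma size_block_ends l : size (block_ends l) = 2 * size l.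
Proof. by elim: l => //= i l IH; rewrite /block_ends /= -/(block_ends l) IH; lia. Qed.

Lemma mem_block_ends i l : i \in l -> (a i \in block_ends l) && (b i \in block_ends l).
Proof.
by move=> Hi; apply/andP; split; apply/flatten_mapP; exists i; rewrite ?inE ?eqxx ?orbT.
Qed.

Lemma block_ends_subset l l' : {subset l <= l'} -> {subset block_ends l <= block_ends l'}.
Proof. by move=> H x /flatten_mapP[i /H Hi Hx]; apply/flatten_mapP; exists i. Qed.

Lemma anc_compose I U i x : indices_in_range U -> 1 <= i <= k -> a i <= x <= b i ->
  {subset anc (compose I U) x <=
     block_ends (anc U i) ++ (if a i < x < b i then anc (I i) x else [::])}.
Proof.
move=> + Hi Hx; set inner := if _ then _ else _.
elim: U => [//|L IHL i' R IHR] /indices_in_range_node[inL Hi' inR].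
have [lt_xa lt_bx] := block_order Hi Hi' Hx.
have /andP[ai' bi'] : (a i' \in block_ends (anc (Node L i' R) i)) &&
    (b i' \in block_ends (anc (Node L i' R) i)) by apply: mem_block_ends; rewrite inE eqxx.
have lift l : {subset l <= anc (Node L i' R) i} ->
    {subset block_ends l ++ inner <= block_ends (anc (Node L i' R) i) ++ inner}.
  move=> sub z; rewrite mem_cat => /orP[/(block_ends_subset sub) Hz|Hz];
  by rewrite mem_cat Hz ?orbT.
rewrite [anc _ x]/= => z; rewrite inE => /orP[/eqP ->|]; first by rewrite mem_cat ai'.
case: (eqVneq x (a i')) => [E|xa].
  by rewrite /= (block_unique Hi Hi' Hx) ?E ?leqnn ?a_le_b.
case: ifP => xlt.
  move/IHL => /(_ inL); apply: lift => w; rewrite /= inE.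
  by rewrite (_ : i == i' = false) -?lt_xa ?xlt => [->|]; rewrite ?orbT //; lia.
have le_ri : i' < i -> {subset anc R i <= anc (Node L i' R) i}.
  by move=> lt w; rewrite /= inE (gtn_eqF lt) ltnNge (ltnW lt) /= => ->; rewrite orbT.
case: ifP => ab'; last first.
  move/IHR => /(_ inR); apply/lift/le_ri.
  by rewrite -lt_bx; have := a_le_b Hi'; lia.
rewrite [anc _ x]/= inE => /orP[/eqP ->|]; first by rewrite mem_cat bi'.
case: (eqVneq x (b i')) => [E|xb].
  by rewrite /= (block_unique Hi Hi' Hx) ?E ?leqnn ?a_le_b.
case: ifP => xlt2.
  have e : i = i' by apply: (block_unique Hi Hi' Hx); lia.
  by move: xa xb; rewrite -e /inner => xa xb Hz; rewrite mem_cat ifT ?Hz ?orbT //; lia.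
by move/IHR => /(_ inR); apply/lift/le_ri; rewrite -lt_bx; lia.
Qed.

Lemma find_sub_compose_other I L i' R i x : 1 <= i <= k -> 1 <= i' <= k ->
  a i <= x <= b i -> i != i' ->
  find_sub (compose I (Node L i' R)) x = find_sub (compose I (if i < i' then L else R)) x.
Proof.
move=> Hi Hi' Hx ne; have abi' := a_le_b Hi'; have [] := block_order Hi Hi' Hx.
case: (ltngtP i i') ne => // [lt|gt] _ lt_a lt_b /=.
  by rewrite lt_a (ltn_eqF (_ : x < a i')) ?lt_a.
have lt_bx : b i' < x by rewrite lt_b.
rewrite (gtn_eqF (leq_ltn_trans abi' lt_bx)) ltnNge (ltnW (leq_ltn_trans abi' lt_bx)) /=.
by case: ifP => //= _; rewrite (gtn_eqF lt_bx) ltnNge (ltnW lt_bx).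
Qed.

Lemma find_sub_compose_start I U i : indices_in_range U -> 1 <= i <= k ->
  find_sub (compose I U) (a i) = compose I (find_sub U i).
Proof.
move=> + Hi; elim: U => [//|L IHL i' R IHR] /indices_in_range_node[inL Hi' inR].
have [<-|ne] := eqVneq i i'; first by rewrite /= !eqxx.
rewrite (find_sub_compose_other _ _ _ Hi) ?leqnn ?a_le_b //= (negbTE ne).
by case: ifP => _; [apply: IHL | apply: IHR].
Qed.

Lemma find_sub_compose_end I U i : indices_in_range U -> 1 <= i <= k -> a i < b i ->
  find_sub (compose I U) (b i) =
  if find_sub U i is Node _ _ R then Node (I i) (b i) (compose I R) else Leaf.
Proof.
move=> + Hi lt_ab; elim: U => [//|L IHL i' R IHR] /indices_in_range_node[inL Hi' inR].
have [<-|ne] := eqVneq i i'.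
  by rewrite /= eqxx (gtn_eqF lt_ab) ltnNge (ltnW lt_ab) lt_ab /= eqxx.
rewrite (find_sub_compose_other _ _ _ Hi) ?leqnn ?(ltnW lt_ab) //= (negbTE ne).
by case: ifP => _; [apply: IHL | apply: IHR].
Qed.

Lemma find_sub_compose_inner I U i x : indices_in_range U -> 1 <= i <= k ->
  a i < x < b i ->
  find_sub (compose I U) x = if find_sub U i is Leaf then Leaf else find_sub (I i) x.
Proof.
move=> + Hi /andP[lt_ax lt_xb].
elim: U => [//|L IHL i' R IHR] /indices_in_range_node[inL Hi' inR].
have [<-|ne] := eqVneq i i'.
  by rewrite /= (gtn_eqF lt_ax) ltnNge (ltnW lt_ax) (ltn_trans lt_ax lt_xb) /=
    (ltn_eqF lt_xb) lt_xb eqxx.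
rewrite (find_sub_compose_other _ _ _ Hi) ?(ltnW lt_ax) ?(ltnW lt_xb) //= (negbTE ne).
by case: ifP => _; [apply: IHL | apply: IHR].
Qed.

Definition inner_tree (T : nat -> tree) i := del_max (del_min (shift (a i - 1) (T i))).

Section InnerTree.

Variables (i : nat) (t : tree).
Hypothesis Hi : 1 <= i <= k.
Hypothesis Ht : is_bst (block_size i) t.

Lemma inorder_shift_block : inorder (shift (a i - 1) t) = block_keys i.
Proof.
rewrite inorder_shift Ht /block_keys.
have -> : a i = (a i - 1) + 1 by have := block_start_gt0 Hi; lia.
by rewrite iotaDl; apply: eq_map => z; lia.
Qed.

Lemma inorder_del_min_shift :
  inorder (del_min (shift (a i - 1) t)) = iota (a i).+1 (b i - a i).
Proof.
apply: (@inorder_del_min _ (a i)).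
by rewrite inorder_shift_block /block_keys /block_size addn1.
Qed.

Lemma inorder_inner_tree : inorder (del_max (del_min (shift (a i - 1) t))) = inner_keys i.
Proof.
have := inorder_del_min_shift; rewrite /inner_keys.
case: (ltngtP (a i) (b i)) (a_le_b Hi) => // [lt|->] _; last first.
  by rewrite subnn => /inorder_nilP ->.
move=> E; apply: (@inorder_del_max _ (b i)); rewrite E.
rewrite [b i - a i](_ : _ = b i - a i - 1 + 1) ?iotaD ?cats1; last lia.
by congr (rcons (iota _ _) _); lia.
Qed.

Lemma anc_inner_tree x : a i < x < b i ->
  {subset anc (del_max (del_min (shift (a i - 1) t))) x <=
          map (addn^~ (a i - 1)) (anc t (x - (a i - 1)))}.
Proof.
move=> Hx z Hz; have E1 := inorder_shift_block; have E2 := inorder_del_min_shift.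
have x_in1 : x \in inorder (del_min (shift (a i - 1) t)) by rewrite E2 mem_iota; lia.
have x_in2 : x \in inorder (del_max (del_min (shift (a i - 1) t))).
  by rewrite inorder_inner_tree mem_iota; lia.
have := anc_del_min (search_tree_iota E1) x_in1 (anc_del_max (search_tree_iota E2) x_in2 Hz).
by rewrite -anc_shift subnK //; lia.
Qed.

End InnerTree.

Lemma find_sub_inner_tree_eq T T' i y : 1 <= i <= k ->
  is_bst (block_size i) (T i) -> is_bst (block_size i) (T' i) ->
  a i < y + (a i - 1) < b i -> find_sub (T i) y = find_sub (T' i) y ->
  find_sub (inner_tree T i) (y + (a i - 1)) = find_sub (inner_tree T' i) (y + (a i - 1)).
Proof.
move=> Hi Ht Ht' Hy Hf; have ai_gt0 := block_start_gt0 Hi.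
have E1 := inorder_shift_block Hi Ht; have E1' := inorder_shift_block Hi Ht'.
have E2 := inorder_del_min_shift Hi Ht; have E2' := inorder_del_min_shift Hi Ht'.
apply: find_sub_del_max_eq; rewrite ?E2 ?E2'.
- exact: search_tree_iota E2.
- exact: search_tree_iota E2'.
- by [].
- by rewrite mem_iota; lia.
- by rewrite -nth_last size_iota nth_iota; [apply/eqP|]; lia.
apply: find_sub_del_min_eq; rewrite ?E1 ?E1' /block_keys /block_size.
- exact: search_tree_iota E1.
- exact: search_tree_iota E1'.
- by [].
- by rewrite mem_iota; lia.
- by rewrite addn1 /=; apply/eqP; lia.
by rewrite !find_sub_shift Hf.
Qed.

Section Step.

Variables (U U' : tree) (T T' : nat -> tree) (j s : nat) (Rt Rj : seq nat).
Hypothesis HU : is_bst k U.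
Hypothesis Hj : 1 <= j <= k.
Hypothesis Hs : a j <= s <= b j.
Hypothesis HT : forall i, 1 <= i <= k -> is_bst (block_size i) (T i).
Hypothesis stepU : step k U j Rt U'.
Hypothesis stepT : step (block_size j) (T j) (s - a j + 1) Rj (T' j).
Hypothesis T'_off : forall i, i != j -> T' i = T i.

Let C := compose (inner_tree T) U.
Let C' := compose (inner_tree T') U'.

Definition touched := undup (block_ends Rt ++ map (addn^~ (a j - 1)) Rj).

Lemma mem_touched z :
  (z \in touched) = (z \in block_ends Rt) || (z \in map (addn^~ (a j - 1)) Rj).
Proof. by rewrite mem_undup mem_cat. Qed.

Lemma size_touched : size touched <= 2 * size Rt + size Rj.
Proof.
by rewrite (leq_trans (size_undup _)) // size_cat size_block_ends size_map.
Qed.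

Lemma is_bst_T' i : 1 <= i <= k -> is_bst (block_size i) (T' i).
Proof.
move=> Hi; have [->|ne] := eqVneq i j; last by rewrite T'_off //; apply: HT.
by case: stepT => [[]].
Qed.

Lemma is_bst_C : is_bst n C.
Proof. by apply: is_bst_compose => // i Hi; apply: inorder_inner_tree (HT Hi). Qed.

Lemma is_bst_C' : is_bst n C'.
Proof.
apply: is_bst_compose; first by case: stepU => [[]].
by move=> i Hi; apply: inorder_inner_tree (is_bst_T' Hi).
Qed.

Lemma touched_Rt i : i \in Rt -> 1 <= i <= k.
Proof. by case: stepU => [[_ sRt _ _ _] _] /sRt; rewrite HU mem_iota; lia. Qed.

Lemma touched_Rj y : y \in Rj -> 1 <= y <= block_size j.
Proof. by case: stepT => [[_ sRj _ _ _] _] /sRj; rewrite (HT Hj) mem_iota; lia. Qed.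

Lemma touched_sub : {subset touched <= inorder C}.
Proof.
move=> z; rewrite mem_touched is_bst_C mem_iota.
case/orP=> [/flatten_mapP[i /touched_Rt Hi]|/mapP[y /touched_Rj Hy ->]].
  rewrite !inE => /orP[]/eqP->;
  by have := block_start_gt0 Hi; have := block_end_le Hi; have := a_le_b Hi; lia.
have := block_end_le Hj; have := block_start_gt0 Hj; rewrite /block_size in Hy; lia.
Qed.

Lemma touched_s : s \in touched.
Proof.
rewrite mem_touched; apply/orP; right; apply/mapP; exists (s - a j + 1).
  by case: stepT => [[]].
by have := block_start_gt0 Hj; lia.
Qed.

Lemma touched_anc_closed x : x \in touched -> {subset anc C x <= touched}.
Proof.
case: stepU => [[_ _ jRt cRt _] _]; case: stepT => [[_ _ _ cRj _] _].
have inU := is_bst_indices_in_range HU.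
have top z i : i \in Rt -> z \in block_ends (anc U i) -> z \in touched.
  by move=> iRt /(block_ends_subset (cRt _ iRt)); rewrite mem_touched => ->.
rewrite mem_touched => /orP[/flatten_mapP[i iRt x_end] | /mapP[y yRj ->]] z.
  have Hi := touched_Rt iRt; have abi := a_le_b Hi.
  have Hx : a i <= x <= b i /\ ~~ (a i < x < b i).
    by move: x_end; rewrite !inE => /orP[]/eqP->; lia.
  by move/(anc_compose inU Hi Hx.1); rewrite (negbTE Hx.2) cats0; apply: top.
have Hy := touched_Rj yRj; have ajgt0 := block_start_gt0 Hj.
have Hx : a j <= y + (a j - 1) <= b j by rewrite /block_size in Hy; lia.
move/(anc_compose inU Hj Hx); rewrite mem_cat => /orP[/top|]; first exact.
case: ifP => // Hint /(anc_inner_tree Hj (HT Hj) Hint) /mapP[w w_anc ->].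
rewrite mem_touched; apply/orP; right; apply/map_f/(cRj _ yRj).
by rewrite addnK in w_anc.
Qed.

Lemma inner_tree_off_path i i' : i \notin Rt -> i' \in inorder (find_sub U i) ->
  inner_tree T i' = inner_tree T' i'.
Proof.
case: stepU => [[_ _ jRt cRt _] _] iRt Hi'; rewrite /inner_tree T'_off //.
apply: contraNneq iRt => Ei'; apply: (cRt _ jRt); rewrite -Ei'.
by apply: mem_anc_find_sub Hi'; apply: search_tree_iota HU.
Qed.

Lemma untouched_subtree x : x \in inorder C -> x \notin touched ->
  find_sub C x = find_sub C' x.
Proof.
case: stepU => [[_ _ jRt _ HU'] sameU]; case: stepT => [_ sameT].
have [inU inU'] := (is_bst_indices_in_range HU, is_bst_indices_in_range HU').
rewrite is_bst_C mem_iota mem_touched negb_or => Hx /andP[not_end not_inner].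
have [i Hi Hxi] : exists2 i, 1 <= i <= k & a i <= x <= b i by apply: block_exists; lia.
have [iU iU'] : i \in inorder U /\ i \in inorder U' by rewrite HU HU' mem_iota; lia.
have not_top : a i = x \/ b i = x -> i \notin Rt.
  by move=> Hend; apply: contra not_end => /mem_block_ends /andP[];
    case: Hend => ->.
have [Exa|xa] := eqVneq (a i) x.
  rewrite -Exa !find_sub_compose_start // -(sameU i iU (not_top (or_introl Exa))).
  by apply: eq_compose => i'; apply: inner_tree_off_path (not_top (or_introl Exa)).
have [Exb|xb] := eqVneq (b i) x.
  have iRt := not_top (or_intror Exb); have lt_ab : a i < b i by lia.
  rewrite -Exb !find_sub_compose_end // -(sameU i iU iRt).
  case E: (find_sub U i) => [//|L i0 R].
  have -> : inner_tree T i = inner_tree T' i.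
    by rewrite /inner_tree T'_off //; apply: contraNneq iRt => ->.
  congr Node; apply: eq_compose => i' Hi'; apply: inner_tree_off_path iRt _.
  by rewrite E /= mem_cat inE Hi' !orbT.
have Hint : a i < x < b i by lia.
rewrite !(find_sub_compose_inner _ _ Hi Hint) //.
case E: (find_sub U i) => [|L1 i1 R1].
  by have := find_sub_neq_Leaf (search_tree_iota HU) iU.
case E': (find_sub U' i) => [|L2 i2 R2].
  by have := find_sub_neq_Leaf (search_tree_iota HU') iU'.
have [Eij|ne] := eqVneq i j; last by rewrite /inner_tree T'_off.
subst i.
have aj_gt0 := block_start_gt0 Hj.
have Ex : x = x - (a j - 1) + (a j - 1) by lia.
rewrite Ex; apply: find_sub_inner_tree_eq; rewrite -?Ex //;
  [exact: HT | exact: is_bst_T' | apply: sameT].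
  by rewrite (HT Hj) mem_iota /block_size; lia.
by apply: contra not_inner => y_in; apply/mapP; exists (x - (a j - 1)); last lia.
Qed.

Lemma step_compose : step n C s touched C'.
Proof.
split; last exact: untouched_subtree.
split; [exact: undup_uniq | exact: touched_sub | exact: touched_s
       | exact: touched_anc_closed | exact: is_bst_C'].
Qed.

End Step.

Definition block_seq i (S : seq nat) := [seq s - a i + 1 | s <- S & a i <= s <= b i].

Definition in_block t s := (1 <= t <= k) && (a t <= s <= b t).

Lemma serves_compose S St U T ct c : all2 in_block St S -> is_bst k U ->
  (forall i, 1 <= i <= k -> is_bst (block_size i) (T i)) ->
  serves k U St ct ->
  (forall i, 1 <= i <= k -> serves (block_size i) (T i) (block_seq i S) (c i)) ->
  exists2 c', c' <= 2 * ct + \sum_(1 <= i < k.+1) c i &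
              serves n (compose (inner_tree T) U) S c'.
Proof.
elim: S St U T ct c => [|s S IH] [|t St] //= U T ct c; first by exists 0.
case/andP=> /andP[Ht Hst] Hall HU HT [Rt [U' [ct' [stU svU ->]]]] HS.
have := HS t Ht; rewrite /block_seq /= Hst /= => -[Rj [Tt' [cj' [stT svT Ect]]]].
pose T' i := if i == t then Tt' else T i.
pose c' i := if i == t then cj' else c i.
have stT' : step (block_size t) (T t) (s - a t + 1) Rj (T' t) by rewrite /T' eqxx.
have T'_off i : i != t -> T' i = T i by move=> /negbTE ne; rewrite /T' ne.
have HU' : is_bst k U' by case: stU => [[]].
have [c'' le_c'' sv''] : exists2 c'', c'' <= 2 * ct' + \sum_(1 <= i < k.+1) c' i &
    serves n (compose (inner_tree T') U') S c''.
  apply: IH Hall HU' _ svU _ => i Hi.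
    exact: (is_bst_T' (T' := T') HT stT' T'_off Hi).
  rewrite /c'; have [->|ne] := eqVneq i t; first by rewrite /T' eqxx.
  rewrite T'_off //; have := HS i Hi; rewrite /block_seq /= ifF //.
  by apply: contraNF ne => Hsi; apply/eqP; apply: block_unique Hi Ht Hsi Hst.
exists (size (touched t Rt Rj) + c''); last by do 3 eexists; split;
  [exact: step_compose HU Ht Hst HT stU stT' T'_off | exact: sv'' | ].
have ht : 1 <= t < k.+1 by lia.
move: le_c'' Ect; rewrite /c'; have := size_touched t Rt Rj.
by have := sum_nat_update c cj' ht; lia.
Qed.

Lemma OPT_compose_le S St : all2 in_block St S ->
  OPT n S <= 2 * OPT k St + \sum_(1 <= i < k.+1) OPT (block_size i) (block_seq i S).
Proof.
move=> Hall.
have St_range : all (fun t => 1 <= t <= k) St.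
  by elim: St S Hall => [|t St IH] [|s S] //= /andP[/andP[-> _] /IH].
have [_ /feasible_OPT[[U [HU svU]] _]] := feasible_in_range St_range.
have blocks i : exists T0, 1 <= i <= k -> is_bst (block_size i) T0 /\
    serves (block_size i) T0 (block_seq i S) (OPT (block_size i) (block_seq i S)).
  have [Hi|_] := boolP (1 <= i <= k); last by exists Leaf.
  have : all (fun s => 1 <= s <= block_size i) (block_seq i S).
    apply/allP => z /mapP[s]; rewrite mem_filter => /andP[Hs _] ->.
    by rewrite /block_size; lia.
  by case/feasible_in_range => c /feasible_OPT[[T0 []]]; exists T0.
have [T HT] := boolp.choice blocks.
have [c' le_c' sv] := serves_compose Hall HU (fun i Hi => (HT i Hi).1) svU
  (fun i Hi => (HT i Hi).2).
have [_ OPT_le_c'] : feasible n S (OPT n S) /\ OPT n S <= c'.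
  apply: feasible_OPT; exists (compose (inner_tree T) U); split => //.
  by apply: is_bst_compose => // i Hi; apply: inorder_inner_tree (HT i Hi).1.
exact: leq_trans OPT_le_c' le_c'.
Qed.

End BlockPartition.

Unset Implicit Arguments.

Theorem mainTheorem10 (n k : nat) (a b : nat -> nat) (S St : seq nat) :
  all (fun s => 1 <= s <= n) S ->
  0 < k ->
  a 1 = 1 ->
  b k = n ->
  (forall i, 1 <= i < k -> a i.+1 = (b i).+1) ->
  (forall i, 1 <= i <= k -> a i <= b i) ->
  size St = size S ->
  (forall j i, j < size S ->
     (nth 0 St j = i) <-> (1 <= i <= k /\ a i <= nth 0 S j <= b i)) ->
  OPT n S <=
    \sum_(1 <= i < k.+1)
       OPT (b i - a i + 1) [seq s - a i + 1 | s <- S & a i <= s <= b i]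
    + 3 * OPT k St.
Proof.
(* The range hypothesis on S follows from the one relating S to St. *)
move=> _ k_gt0 a1 bk a_next a_le_b size_St nth_St.
have blocks : all2 (in_block k a b) St S.
  apply: all2_nth => // j Hj; have [Hk Hab] := (nth_St j (nth 0 St j) Hj).1 erefl.
  by rewrite /in_block Hk Hab.
have := OPT_compose_le k_gt0 a1 bk a_next a_le_b blocks.
rewrite /block_size /block_seq; lia.
Qed.
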